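(* Let $(W,S)$, $\Gamma$, $L$ be as in the context and let $E\mapsto\tilde{a}_E$ be the function defined recursively there. Then for every $E\in\mathrm{Irr}(W)$ we have $\tilde a_E\ge\tilde a'_E\ge 0$ and $\tilde a_{E\otimes\mathrm{sgn}}-\tilde a_E=\omega_L(E)$. Moreover, if $J\subsetneqq S$, $M\in\mathrm{Irr}(W_J)$ and $E$ is an irreducible constituent of the representation induced from $M$, then $\tilde a_E\ge\tilde a_M$.
   Context: $(W,S)$ is a finite Coxeter group with length function $l$. $\Gamma$ is an abelian group with a total order $\le$ compatible with addition. $L\colon W\to\Gamma$ is a weight function: $L(ww')=L(w)+L(w')$ whenever $l(ww')=l(w)+l(w')$; assume $L(s)\ge 0$ for all $s\in S$. For $J\subseteq S$, $W_J$ is the parabolic subgroup generated by $J$ (a Coxeter group with generators $J$), and $L$ restricts to a weight function on it. $\mathrm{Irr}(W)$ is the set of complex irreducible representations of $W$; $\mathrm{sgn}$ is the sign representation. Let $S'\subseteq S$ be a set of representatives of the conjugacy classes of $W$ contained in $T=\{wsw^{-1}\}$, and $N_s$ the size of the class of $s$; set $\omega_L(E):=\sum_{s\in S'}\frac{N_s\,\mathrm{trace}(s,E)}{\dim E}L(s)\in\Gamma$ (these coefficients are integers). For $M\in\mathrm{Irr}(W_J)$, write $M\uparrow E$ if $E$ is a constituent of $\mathrm{Ind}_{W_J}^W M$. Definition of $\tilde a$ (recursively over parabolic subgroups): if $W=\{1\}$, $\tilde a_{1_W}:=0$. Otherwise, assuming $\tilde a$ defined for all $W_J$, $J\subsetneqq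 S$, set $\tilde a'_E:=\max\{\tilde a_M\mid M\in\mathrm{Irr}(W_J),\ J\subsetneqq S,\ M\uparrow E\}$, and $\tilde a_E:=\tilde a'_E$ if $\tilde a'_{E\otimes\mathrm{sgn}}-\tilde a'_E\le\omega_L(E)$, and $\tilde a_E:=\tilde a'_{E\otimes\mathrm{sgn}}-\omega_L(E)$ otherwise. *)

From HB Require Import structures.
From mathcomp Require Import all_boot all_order all_algebra all_fingroup all_solvable all_field all_character.
Set Implicit Arguments. Unset Strict Implicit. Unset Printing Implicit Defensive.
Import Order.TTheory GRing.Theory Num.Theory.

Local Open Scope ring_scope.
Section Coxeter.
Variable gT : finGroupType.

Definition wprod (t : seq gT) : gT := (\prod_(s <- t) s)%g.

(* length of w with respect to the generating set S: minimal size of a word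
   in S with product w (all elements of <<S>>%G have such a word of size < #|gT|);
   default #|gT| for elements outside <<S>>%G. *)
Definition has_word (S : {set gT}) (w : gT) (n : nat) : bool :=
  [exists t : n.-tuple gT, all (mem S) t && (wprod t == w)].

Definition len (S : {set gT}) (w : gT) : nat :=
  \big[minn/#|gT|]_(n < #|gT|.+1 | has_word S w n) n.

(* (<<S>>%G, S) is a Coxeter system: S consists of involutions and the exchange
   condition holds (Bourbaki, Lie IV, 1.6, Thm 1 characterisation). *)
Definition coxeter_system (S : {set gT}) : Prop :=
  (forall s, s \in S -> s != 1%g /\ (s ^+ 2 = 1)%g) /\
  (forall (t : seq gT) (s : gT), s \in S -> all (mem S) t ->
     len S (wprod t) = size t -> (len S (s * wprod t)%g <= size t)%N ->
     exists2 i, (i < size t)%N & (s * wprod t)%g = wprod (take i t ++ drop i.+1 t)).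

Definition weight_function (Gamma : porderZmodType) (S : {set gT}) (L : gT -> Gamma)
  : Prop :=
  (forall w w', w \in <<S>>%G -> w' \in <<S>>%G ->
     len S (w * w')%g = (len S w + len S w')%N -> L (w * w')%g = (L w + L w')%R) /\
  (forall s, s \in S -> (0 <= L s)%R).

Definition sgnI (J : {set gT}) (E : Iirr <<J>>%G) : Iirr <<J>>%G :=
  odflt E [pick j : Iirr <<J>>%G |
    [forall x in <<J>>%G, 'chi_j x == ((-1) ^+ len J x * 'chi_E x)%R]].

Variable Gamma : porderZmodType.
Variable L : gT -> Gamma.

(* omega_L(E) for W_J, with the canonical set of representatives
   S' = { s in J | s = repr (class of s in W_J meet J) } *)
Definition omega (J : {set gT}) (E : Iirr <<J>>%G) : Gamma :=
  let chi := 'chi[<<J>>%G]_E in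
  (\sum_(s in J | s == (repr ((s ^: <<J>>%G)%g :&: J))%g)
      L s *~ Num.floor (#|(s ^: <<J>>%G)%g|%:R * chi s / chi 1%g))%R.

Definition seqmax (l : seq Gamma) : Gamma :=
  foldr (fun x y => Order.max x y) (head 0%R l) l.

Definition aprime (f : forall K : {set gT}, Iirr <<K>>%G -> Gamma)
    (J : {set gT}) (E : Iirr <<J>>%G) : Gamma :=
  seqmax (flatten [seq [seq f K M | M <- enum (Iirr <<K>>%G) &
                          E \in irr_constt ('Ind[<<J>>%G] 'chi[<<K>>%G]_M)]
                   | K <- enum [set K : {set gT} | K \proper J]]).

Definition astep (f : forall K : {set gT}, Iirr <<K>>%G -> Gamma)
    (J : {set gT}) (E : Iirr <<J>>%G) : Gamma :=
  if (aprime f (sgnI E) - aprime f E <= omega E)%R then aprime f E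
  else (aprime f (sgnI E) - omega E)%R.

Fixpoint atl (n : nat) : forall J : {set gT}, Iirr <<J>>%G -> Gamma :=
  match n with
  | 0 => fun _ _ => 0%R
  | n'.+1 => fun J E => if J == set0 then 0%R else astep (atl n') E
  end.

(* a~_E and a~'_E for E in Irr(W_J) (fuel #|J|.+1 suffices) *)
Definition atilde (J : {set gT}) (E : Iirr <<J>>%G) : Gamma := atl #|J|.+1 E.
Definition atilde' (J : {set gT}) (E : Iirr <<J>>%G) : Gamma :=
  aprime (atl #|J|) E.

End Coxeter.

From HB Require Import structures.
From mathcomp Require Import all_boot all_order all_algebra all_fingroup all_solvable all_field all_character.
From mathcomp Require Import zify.
Set Implicit Arguments. Unset Strict Implicit. Unset Printing Implicit Defensive.
Import Order.TTheory GRing.Theory Num.Theory.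
Local Open Scope ring_scope.

(* In a totally ordered group, a~_E = max(a~'_E, a~'_(E (x) sgn) - omega_L(E)).
   Tensoring with sgn is an involution on Irr(W), and omega_L(E (x) sgn) = - omega_L(E)
   because every s in S acts by -1 in sgn; the difference of the two maxima is then
   exactly omega_L(E).
   The bound a~'_E >= 0 comes from the constituent of E induced from W_{} = 1, whose
   a~ is 0, and monotonicity under induction is built into a~'_E being a maximum. *)

HB.instance Definition _ := SemiGroup.isComLaw.Build nat minn minnA minnC.

Lemma all_take_drop (T : eqType) (a : pred T) (s : seq T) i j :
  all a s -> all a (take i s ++ drop j s).
Proof.
move=> /allP a_s; rewrite all_cat; apply/andP.
by split; apply/allP => x x_s; apply: a_s; [exact: mem_take x_s | exact: mem_drop x_s].
Qed.

Section Words.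
Variable gT : finGroupType.
Implicit Types (S : {set gT}) (t : seq gT) (s w : gT).

Lemma wprod_nil : wprod [::] = 1%g :> gT.
Proof. by rewrite /wprod big_nil. Qed.

Lemma wprod_cons s t : wprod (s :: t) = (s * wprod t)%g.
Proof. by rewrite /wprod big_cons. Qed.

Lemma wprod_seq1 s : wprod [:: s] = s.
Proof. by rewrite wprod_cons wprod_nil mulg1. Qed.

Lemma wprod_cat t1 t2 : wprod (t1 ++ t2) = (wprod t1 * wprod t2)%g.
Proof. by rewrite /wprod big_cat. Qed.

Lemma mem_gen_wprod S t : all (mem S) t -> wprod t \in <<S>>%g.
Proof.
elim: t => [|s t IH] /=; first by rewrite wprod_nil group1.
by case/andP => Ss St; rewrite wprod_cons groupM ?IH ?mem_gen.
Qed.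

Lemma gen_wprod S w : w \in <<S>>%g -> exists2 t, all (mem S) t & wprod t = w.
Proof.
case/gen_prodgP => n [c Sc ->]; exists [seq c i | i <- enum 'I_n].
  by apply/allP => x /mapP [i _ ->]; exact: Sc.
by rewrite /wprod big_map enumT.
Qed.

Lemma has_wordP S w n :
  reflect (exists t, [/\ size t = n, all (mem S) t & wprod t = w]) (has_word S w n).
Proof.
apply: (iffP existsP) => [[t /andP[St /eqP <-]] | [t [size_t St <-]]].
  by exists (val t); rewrite size_tuple.
have size_t' : size t == n by rewrite size_t.
by exists (Tuple size_t'); rewrite /= St eqxx.
Qed.

Lemma len_le S w n : has_word S w n -> (len S w <= n)%N.
Proof.
move=> Sw_n; have [lt_n | lt_card] := ltnP n #|gT|.+1.
  by rewrite /len (bigD1 (Ordinal lt_n)) //= geq_minl.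
apply: leq_trans (ltnW lt_card); rewrite /len.
apply: (big_ind (fun x => x <= #|gT|)%N) => // [x y le_x _ | i _].
  by rewrite geq_min le_x.
by rewrite -ltnS.
Qed.

Lemma len_word_le S t : all (mem S) t -> (len S (wprod t) <= size t)%N.
Proof. by move=> St; apply: len_le; apply/has_wordP; exists t. Qed.

Lemma len_min S w m : has_word S w m -> (forall n, has_word S w n -> m <= n)%N ->
  (m <= #|gT|)%N -> len S w = m.
Proof.
move=> Sw_m m_min le_m; apply/eqP; rewrite eqn_leq len_le //=.
apply: (big_ind (leq m)) => // [x y le_x le_y | i /m_min //].
by rewrite leq_min le_x.
Qed.

(* The prefixes of a word of minimal length have pairwise distinct products. *)
Lemma min_word_lt_card S w m : has_word S w m ->
  (forall n, has_word S w n -> m <= n)%N -> (m < #|gT|)%N.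
Proof.
case/has_wordP => t [<- St <-] t_min.
pose prefix (i : 'I_(size t).+1) := wprod (take i t).
suff /leq_card : injective prefix by rewrite card_ord.
have no_repeat (i j : 'I_(size t).+1) : (i < j)%N -> prefix i != prefix j.
  move=> lt_ij; apply/eqP => eq_ij.
  have /t_min : has_word S (wprod t) (size (take i t ++ drop j t)).
    apply/has_wordP; exists (take i t ++ drop j t); split; rewrite ?all_take_drop //.
    by rewrite wprod_cat -[wprod (take i t)]/(prefix i) eq_ij -wprod_cat cat_take_drop.
  have lt_j := ltn_ord j; rewrite size_cat size_drop size_takel; lia.
move=> i j eq_ij; apply/val_inj; case: (ltngtP i j) => // [lt_ij | lt_ji].
  by move/eqP: eq_ij; rewrite (negPf (no_repeat _ _ lt_ij)).
by move/esym/eqP: eq_ij; rewrite (negPf (no_repeat _ _ lt_ji)).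
Qed.

Lemma len_word S w : w \in <<S>>%g ->
  exists t, [/\ size t = len S w, all (mem S) t & wprod t = w].
Proof.
case/gen_wprod => t St <-.
have : exists n, has_word S (wprod t) n by exists (size t); apply/has_wordP; exists t.
case/ex_minnP => m Sw_m m_min.
rewrite (len_min Sw_m m_min); first exact/has_wordP.
exact: ltnW (min_word_lt_card Sw_m m_min).
Qed.

Lemma len_mulg_le S x y : x \in <<S>>%g -> y \in <<S>>%g ->
  (len S (x * y) <= len S x + len S y)%N.
Proof.
case/len_word => tx [<- Stx <-]; case/len_word => ty [<- Sty <-].
by rewrite -wprod_cat -size_cat len_word_le // all_cat Stx.
Qed.

Lemma len1g S : len S 1 = 0%N.
Proof. by apply/eqP; rewrite -leqn0 -wprod_nil len_word_le. Qed.

End Words.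

Section Parity.
Variables (gT : finGroupType) (S : {set gT}).
Hypothesis HS : coxeter_system S.

Lemma len_gen_mulg_neq s w : s \in S -> w \in <<S>>%g -> len S (s * w) != len S w.
Proof.
move=> Ss /len_word [t [size_t St def_w]]; subst w; apply/eqP => eq_len.
have le_len : (len S (s * wprod t) <= size t)%N by rewrite eq_len size_t.
have [i lt_i eq_sw] := HS.2 t s Ss St (esym size_t) le_len.
have := len_word_le (all_take_drop i i.+1 St).
rewrite -eq_sw eq_len -size_t size_cat size_drop size_takel; [lia | exact: ltnW].
Qed.

Lemma odd_len_gen_mulg s w : s \in S -> w \in <<S>>%g ->
  odd (len S (s * w)) = ~~ odd (len S w).
Proof.
move=> Ss Sw; have Ss' : s \in <<S>>%g by rewrite mem_gen.
have le_s : (len S s <= 1)%N by rewrite -(wprod_seq1 s) len_word_le //= Ss.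
have ss : (s * s = 1)%g by have := (HS.1 s Ss).2; rewrite expg2.
have le_sw : (len S (s * w) <= len S s + len S w)%N := len_mulg_le Ss' Sw.
have le_w : (len S w <= len S s + len S (s * w))%N.
  by have := len_mulg_le Ss' (groupM Ss' Sw); rewrite mulgA ss mul1g.
have neq_len : len S (s * w) <> len S w by apply/eqP; exact: len_gen_mulg_neq.
have [-> | ->] : len S (s * w) = (len S w).+1 \/ len S w = (len S (s * w)).+1 by lia.
  by rewrite oddS.
by rewrite oddS negbK.
Qed.

Lemma odd_len_wprod t : all (mem S) t -> odd (len S (wprod t)) = odd (size t).
Proof.
elim: t => [|s t IH] /=; first by rewrite wprod_nil len1g.
by case/andP => Ss St; rewrite wprod_cons odd_len_gen_mulg ?mem_gen_wprod ?IH.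
Qed.

Lemma odd_len_mulg x y : x \in <<S>>%g -> y \in <<S>>%g ->
  odd (len S (x * y)) = odd (len S x) (+) odd (len S y).
Proof.
case/gen_wprod => tx Stx <-; case/gen_wprod => ty Sty <-.
by rewrite -wprod_cat !odd_len_wprod ?all_cat ?Stx // size_cat oddD.
Qed.

Lemma odd_len_gen s : s \in S -> odd (len S s).
Proof. by move=> Ss; rewrite -(wprod_seq1 s) odd_len_wprod //= Ss. Qed.

End Parity.

(* Restricted to <[s]>, chi is a sum of linear characters, whose values at s are +-1. *)
Lemma char_invol_rat (gT : finGroupType) (G : {group gT}) (chi : 'CF(G)) s :
  chi \is a character -> s \in G -> (s ^+ 2 = 1)%g -> chi s \in Crat.
Proof.
move=> Nchi Gs s2; pose H := <[s]>%G.
have sHG : H \subset G by rewrite cycle_subG.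
rewrite -(cfResE chi sHG (cycle_id s)) (cfun_sum_constt ('Res[H] chi)) sum_cfunE.
apply: rpred_sum => j _; rewrite cfunE rpredM //.
  by have /natrP[n ->] := Cnat_cfdot_char_irr j (cfRes_char H Nchi); apply: rpred_nat.
have lin_j : 'chi[H]_j \is a linear_char by apply/char_abelianP/cycle_abelian.
have : 'chi[H]_j s ^+ 2 == 1 by rewrite -(lin_charX lin_j) ?cycle_id // s2 lin_char1.
by rewrite sqrf_eq1 => /orP[] /eqP ->; rewrite ?rpredN rpred1.
Qed.

Section Sign.
Variables (gT : finGroupType) (S : {set gT}).
Hypothesis HS : coxeter_system S.

Definition sgn_mx (x : gT) : 'M[algC]_1 := ((-1) ^+ len S x)%:M.

Lemma sgn_mx_repr : mx_repr <<S>>%G sgn_mx.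
Proof.
split=> [|x y Sx Sy]; first by rewrite /sgn_mx len1g.
by rewrite /sgn_mx -scalar_mxM -signr_odd odd_len_mulg // signr_addb !signr_odd.
Qed.

Definition sgn_char : 'CF(<<S>>%G) := cfRepr (MxRepresentation sgn_mx_repr).

Lemma sgn_charE x : x \in <<S>>%g -> sgn_char x = (-1) ^+ len S x.
Proof. by move=> Sx; rewrite cfunE Sx mulr1n /= mxtrace_scalar. Qed.

Lemma sgn_char_lin : sgn_char \is a linear_char.
Proof. by rewrite qualifE/= cfRepr_char /= cfRepr1. Qed.

Lemma sgnIE (E : Iirr <<S>>%G) x : x \in <<S>>%g ->
  'chi_(sgnI E) x = (-1) ^+ len S x * 'chi_E x.
Proof.
have /irrP[j def_j] : sgn_char * 'chi_E \in irr <<S>>%G.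
  exact: mul_lin_irr sgn_char_lin (mem_irr E).
rewrite /sgnI; case: pickP => [i /forall_inP sgn_i Sx | /(_ j)/negP[]].
  exact/eqP/sgn_i.
by apply/forall_inP => y Sy; rewrite -def_j cfunE sgn_charE.
Qed.

Lemma sgnIK : involutive (@sgnI gT S).
Proof.
move=> E; apply: irr_inj; apply/cfun_inP => x Sx.
by rewrite !sgnIE // mulrA -exprD -signr_odd oddD addbb mul1r.
Qed.

Lemma sgnI_gen (E : Iirr <<S>>%G) s : s \in S -> 'chi_(sgnI E) s = - 'chi_E s.
Proof. by move=> Ss; rewrite sgnIE ?mem_gen // -signr_odd odd_len_gen // mulN1r. Qed.

Lemma sgnI1 (E : Iirr <<S>>%G) : 'chi_(sgnI E) 1%g = 'chi_E 1%g.
Proof. by rewrite sgnIE ?group1 // len1g mul1r. Qed.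

Lemma omega_sgnI (Gamma : porderZmodType) (L : gT -> Gamma) (E : Iirr <<S>>%G) :
  omega L (sgnI E) = - omega L E.
Proof.
rewrite /omega -sumrN; apply: eq_bigr => s /andP[Ss _].
have Gs : s \in <<S>>%g by rewrite mem_gen.
rewrite sgnI_gen // sgnI1 mulrN mulNr floorN ?mulrNz //.
apply: Cint_rat_Aint; last exact: Aint_class_div_irr1.
rewrite rpred_div ?rpredM ?rpred_nat ?irr1_degree ?rpred_nat //.
exact: char_invol_rat (irr_char E) Gs (HS.1 s Ss).2.
Qed.

End Sign.

Section TotalOrder.
Variable Gamma : porderZmodType.
Hypothesis Gamma_total : forall x y : Gamma, x <= y \/ y <= x.
Hypothesis Gamma_add : forall x y z : Gamma, x <= y -> x + z <= y + z.

Lemma ler_oppW (x y : Gamma) : x <= y -> - y <= - x.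
Proof. by move=> /(Gamma_add (- x - y)); rewrite addNKr addrCA subrr addr0. Qed.

Lemma seqmax_ge (l : seq Gamma) x : x \in l -> x <= seqmax l.
Proof.
rewrite /seqmax; move: (head 0 l) => d; elim: l => //= a l IH.
rewrite inE => /predU1P[-> | /IH le_x];
  case: (Gamma_total a (foldr (fun x y => Order.max x y) d l)) => cmp.
- by rewrite max_r.
- by rewrite max_l.
- by rewrite max_r.
- by rewrite max_l // (le_trans le_x).
Qed.

(* [raise a b w] is max a (b - w) in a totally ordered group. *)
Definition raise (a b w : Gamma) := if b - a <= w then a else b - w.

Lemma raise_ge a b w : a <= raise a b w.
Proof.
rewrite /raise; case: ifPn => // /negP lt_w.
have [le_w | /(Gamma_add (a - w))] := Gamma_total (b - a) w; first by case: lt_w.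
by rewrite addrCA subrr addr0 -addrA addKr.
Qed.

Lemma raise_opp_sub a b w : raise b a (- w) - raise a b w = w.
Proof.
rewrite /raise; case: ifPn => le_ab; case: ifPn => le_ba.
- apply/le_anti; rewrite le_ba /=.
  by have := ler_oppW le_ab; rewrite opprK opprB.
- by rewrite opprB addrC subrK.
- by rewrite opprK addrAC subrr add0r.
- have [le | /ler_oppW] := Gamma_total (a - b) (- w); first by rewrite le in le_ab.
  by rewrite opprK opprB (negPf le_ba).
Qed.

End TotalOrder.

Section ATilde.
Variables (gT : finGroupType) (Gamma : porderZmodType) (L : gT -> Gamma).
Implicit Types (f g : forall K : {set gT}, Iirr <<K>>%G -> Gamma) (J K : {set gT}).

Lemma aprime_ext f g J (E : Iirr <<J>>%G) :
  (forall K, K \proper J -> forall M, f K M = g K M) -> aprime f E = aprime g E.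
Proof.
move=> eq_fg; rewrite /aprime; congr (seqmax (flatten _)).
by apply/eq_in_map => K; rewrite mem_enum inE => ltKJ; apply/eq_map/eq_fg.
Qed.

Lemma aprime_nil f J (E : Iirr <<J>>%G) : J = set0 -> aprime f E = 0.
Proof.
move=> J0; rewrite /aprime (_ : [set K : {set gT} | K \proper J] = set0) ?enum_set0 //.
by apply/setP => K; rewrite !inE J0 properE sub0set andbF.
Qed.

Lemma astepE f J (E : Iirr <<J>>%G) :
  astep L f E = raise (aprime f E) (aprime f (sgnI E)) (omega L E).
Proof. by []. Qed.

Lemma atl_set0 n (M : Iirr <<set0 : {set gT}>>%G) : atl L n M = 0.
Proof. by case: n => //= n; rewrite eqxx. Qed.

Lemma atl_fuel n J (E : Iirr <<J>>%G) : (#|J| < n)%N -> atl L n E = atl L n.+1 E.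
Proof.
elim: n J E => [//|n IH] J E ltJn /=; case: (J == set0) => //.
have eq_atl K : K \proper J -> forall M : Iirr <<K>>%G, atl L n M = atl L n.+1 M.
  by move=> /proper_card ltKJ M; apply: IH; lia.
by rewrite !astepE !(aprime_ext (g := atl L n.+1) _ eq_atl).
Qed.

Lemma atl_proper J K (M : Iirr <<K>>%G) : K \proper J -> atl L #|J| M = atilde L M.
Proof.
move=> /proper_card ltKJ; rewrite /atilde; elim: #|J| ltKJ => // n IH.
rewrite ltnS leq_eqVlt => /predU1P[-> // | lt_Kn].
by rewrite -atl_fuel // IH.
Qed.

Lemma atildeE J (E : Iirr <<J>>%G) : J != set0 -> atilde L E = astep L (atl L #|J|) E.
Proof. by rewrite /atilde /= => /negPf ->. Qed.

Lemma atilde_nil J (E : Iirr <<J>>%G) : J = set0 -> atilde L E = 0.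
Proof. by move=> J0; rewrite /atilde /= (introT eqP J0). Qed.

Lemma omega_nil J (E : Iirr <<J>>%G) : J = set0 -> omega L E = 0.
Proof. by move=> J0; rewrite /omega big1 // => s /andP[Js _]; rewrite J0 inE in Js. Qed.

Hypothesis Gamma_total : forall x y : Gamma, x <= y \/ y <= x.
Hypothesis Gamma_add : forall x y z : Gamma, x <= y -> x + z <= y + z.

Lemma le_aprime f J (E : Iirr <<J>>%G) K (M : Iirr <<K>>%G) : K \proper J ->
  E \in irr_constt ('Ind[<<J>>%G] 'chi[<<K>>%G]_M) -> f K M <= aprime f E.
Proof.
move=> ltKJ EM; apply: seqmax_ge => //; apply/flatten_mapP.
by exists K; [rewrite mem_enum inE | apply: map_f; rewrite mem_filter EM mem_enum].
Qed.

Lemma atilde'_ge0 J (E : Iirr <<J>>%G) : 0 <= atilde' L E.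
Proof.
have [J0 | nzJ] := eqVneq J set0; first by rewrite /atilde' aprime_nil.
have [M] := constt_cfRes_irr <<set0 : {set gT}>>%G E; rewrite -constt_Ind_Res => EM.
by rewrite -(atl_set0 #|J| M); apply: le_aprime EM; rewrite proper0.
Qed.

Lemma atilde'_le_atilde J (E : Iirr <<J>>%G) : atilde' L E <= atilde L E.
Proof.
have [J0 | nzJ] := eqVneq J set0; first by rewrite /atilde' aprime_nil ?atilde_nil.
by rewrite atildeE // astepE raise_ge.
Qed.

Lemma atilde_Ind J K (M : Iirr <<K>>%G) (E : Iirr <<J>>%G) : K \proper J ->
  E \in irr_constt ('Ind[<<J>>%G] 'chi[<<K>>%G]_M) -> atilde L M <= atilde L E.
Proof.
move=> ltKJ EM; have nzJ : J != set0 by apply: contraTneq ltKJ => ->; rewrite properE sub0set andbF.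
rewrite [atilde L E]atildeE // astepE -(atl_proper M ltKJ).
exact: le_trans (le_aprime (atl L #|J|) ltKJ EM) (raise_ge Gamma_total Gamma_add _ _ _).
Qed.

Lemma atilde_sgnI S (E : Iirr <<S>>%G) : coxeter_system S ->
  atilde L (sgnI E) - atilde L E = omega L E.
Proof.
move=> HS; have [S0 | nzS] := eqVneq S set0.
  by rewrite !atilde_nil ?omega_nil ?subrr.
by rewrite !atildeE // !astepE (sgnIK HS) (omega_sgnI HS) raise_opp_sub.
Qed.

End ATilde.

Unset Implicit Arguments. Set Strict Implicit.

Theorem mainTheorem4 (gT : finGroupType) (S : {set gT})
  (Gamma : porderZmodType)
  (Gamma_total : forall x y : Gamma, (x <= y)%R \/ (y <= x)%R)
  (Gamma_add : forall x y z : Gamma, (x <= y)%R -> (x + z <= y + z)%R)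
  (L : gT -> Gamma)
  (HS : coxeter_system S) (HL : weight_function S L) :
  (forall E : Iirr <<S>>%G,
     (atilde' L E <= atilde L E)%R /\ (0 <= atilde' L E)%R /\
     (atilde L (sgnI E) - atilde L E = omega L E)%R) /\
  (forall (J : {set gT}), J \proper S -> forall (M : Iirr <<J>>%G) (E : Iirr <<S>>%G),
     E \in irr_constt ('Ind[<<S>>%G] 'chi[<<J>>%G]_M) ->
     (atilde L M <= atilde L E)%R).
Proof.
split=> [E | J ltJS M E EM]; last exact: atilde_Ind.
split; first exact: atilde'_le_atilde.
by split; [exact: atilde'_ge0 | exact: atilde_sgnI].
Qed.
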